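(* Let $n\ge 1$ and $m\ge 1$. For any $\textsc{P}$-layers $L_1,\dots,L_m$ and any $\textsc{C}$-layers $C_1,\dots,C_m$ on $n$ qubits, there exist a $\textsc{P}$-layer $L'$, a $\textsc{CZ}$-layer $Z'$ and a $\textsc{C}$-layer $C'$ on $n$ qubits such that $$C_m L_m C_{m-1}L_{m-1}\cdots C_1 L_1 \;=\; C'\,Z'\,L'$$ as exact unitary matrices. In stage notation: $(\text{-P-C-})^m = \text{-P-CZ-C-}$.
   Context: Gates: $\textsc{H}=\frac{1}{\sqrt2}\begin{pmatrix}1&1\\1&-1\end{pmatrix}$, $\textsc{P}=\mathrm{diag}(1,i)$, $\textsc{CNOT}|a,b\rangle=|a,a\oplus b\rangle$, $\textsc{CZ}|a,b\rangle=(-1)^{ab}|a,b\rangle$. Layers on $n$ qubits: an $\textsc{H}$-layer is $\bigotimes_{j=1}^n \textsc{H}^{b_j}$ with $b_j\in\{0,1\}$; a $\textsc{P}$-layer is $\bigotimes_{j=1}^n \textsc{P}^{a_j}$ with $a_j\in\{0,1,2,3\}$; a $\textsc{C}$-layer is any unitary implemented by a circuit of $\textsc{CNOT}$ gates (equivalently $|x\rangle\mapsto|Ax\rangle$ for an invertible $n\times n$ matrix $A$ over $\mathbb F_2$); a $\textsc{CZ}$-layer is any product of $\textsc{CZ}$ gates (acting on arbitrary pairs of the $n$ qubits). Stage notation such as -X-Y-Z- denotes a circuit in which stage X is applied first, then Y, then Z, i.e. the operator product $ZYX$. *)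

From HB Require Import structures.
From mathcomp Require Import all_boot all_order all_algebra algC.
Set Implicit Arguments. Unset Strict Implicit. Unset Printing Implicit Defensive.
Import Order.TTheory GRing.Theory Num.Theory.
Local Open Scope ring_scope.

(* Computational basis states of n qubits: bit vectors x in F_2^n (columns);
   bit j of x is x j 0. *)
Definition basis (n : nat) := 'cV['F_2]_n.

(* An operator on n qubits, given by its matrix entries <x|U|y> over the
   complex algebraic numbers algC. *)
Definition qop (n : nat) := basis n -> basis n -> algC.

Definition qmul (n : nat) (U V : qop n) : qop n :=
  fun x y => \sum_(z : basis n) U x z * V z y.

Definition qid (n : nat) : qop n := fun x y => (x == y)%:R.

Definition bitn (n : nat) (x : basis n) (j : 'I_n) : nat := (x j ord0 != 0%R)%N.

(* P-layer  \bigotimes_j P^{a_j},  P = diag(1, i), a_j in {0,1,2,3}. *)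
Definition Player (n : nat) (a : 'I_n -> 'I_4) : qop n :=
  fun x y => (x == y)%:R * \prod_(j < n) 'i ^+ (a j * bitn x j)%N.

(* C-layer  |y> |-> |A y>  for an invertible A over F_2. *)
Definition Clayer (n : nat) (A : 'M['F_2]_n) : qop n :=
  fun x y => (x == A *m y)%:R.

Definition CZgate (n : nat) (j k : 'I_n) : qop n :=
  fun x y => (x == y)%:R * (-1) ^+ (bitn x j * bitn x k)%N.

Definition CZlayer (n : nat) (s : seq ('I_n * 'I_n)) : qop n :=
  foldr (fun p U => qmul (CZgate p.1 p.2) U) (@qid n) s.

(* C_{k-1} L_{k-1} ... C_0 L_0  (layers indexed from 0). *)
Fixpoint PCcircuit (n : nat) (L : nat -> 'I_n -> 'I_4)
    (A : nat -> 'M['F_2]_n) (k : nat) : qop n :=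
  match k with
  | 0 => @qid n
  | k'.+1 => qmul (Clayer (A k')) (qmul (Player (L k')) (PCcircuit L A k'))
  end.

From HB Require Import structures.
From mathcomp Require Import all_boot all_order all_algebra algC.
From mathcomp Require Import ring.
Import Order.TTheory GRing.Theory Num.Theory.
Local Open Scope ring_scope.

(* Every circuit (-P-C-)^k maps |y> to phi(y) |B y> for an invertible B and a
   phase of the form phi(y) = i^(linear in y) * (-1)^(quadratic in y): the
   i-part is a P-layer and the (-1)-part a CZ-layer.  Such phases are closed
   under products, and under linear substitutions y |-> B y because, for bits
   t, u with t (+) u their sum in F_2, i^(t (+) u) = i^t * i^u * (-1)^(t u):
   the carry of a P-phase applied to a parity is a product of CZ-phases. *)

Definition nbit (u : 'F_2) : nat := u != 0.

Lemma F2_cases (u : 'F_2) : u = 0 \/ u = 1.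
Proof.
by case: u => [[|[|k]] Hk]; [left; exact: val_inj | right; exact: val_inj |].
Qed.

Lemma F2_add11 : 1 + 1 = 0 :> 'F_2. Proof. exact/eqP. Qed.

Lemma expCi4 : 'i ^+ 4 = 1 :> algC.
Proof. by rewrite (_ : 4 = 2 * 2)%N // exprM sqrCi sqrrN expr1n. Qed.

Lemma expCi_modn (k : nat) (b : bool) : 'i ^+ (k %% 4 * b) = 'i ^+ (k * b) :> algC.
Proof.
case: b; rewrite ?muln0 ?muln1 //.
by rewrite {2}(divn_eq k 4) exprD mulnC exprM expCi4 expr1n mul1r.
Qed.

Lemma sign_nbitD (t u : 'F_2) (b : nat) :
  (-1) ^+ (nbit (t + u) * b) = (-1) ^+ (nbit t * b) * (-1) ^+ (nbit u * b) :> algC.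
Proof.
case: (F2_cases t) => ->; case: (F2_cases u) => ->;
  rewrite /nbit ?addr0 ?add0r ?F2_add11 /= ?mul0n ?mul1n ?expr0 ?mul1r ?mulr1 //.
by rewrite -expr2 sqrr_sign.
Qed.

Lemma expCi_nbitD (t u : 'F_2) (c : nat) :
  'i ^+ (c * nbit (t + u))
  = 'i ^+ (c * nbit t) * 'i ^+ (c * nbit u) * ((-1) ^+ (nbit u * nbit t)) ^+ c
  :> algC.
Proof.
case: (F2_cases t) => ->; case: (F2_cases u) => ->;
  rewrite /nbit ?addr0 ?add0r ?F2_add11 /= ?muln0 ?muln1 ?expr0 ?expr1n ?mul1r ?mulr1 //.
by rewrite -exprD addnn -mul2n exprM sqrCi expr1 -expr2 sqrr_sign.
Qed.

Section PhasePolynomials.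

Context {n : nat}.
Implicit Types (y : basis n) (f g : basis n -> algC).

Definition Pphase (a : 'I_n -> 'I_4) y : algC := \prod_(j < n) 'i ^+ (a j * bitn y j).

Definition CZphase (s : seq ('I_n * 'I_n)) y : algC :=
  \prod_(p <- s) (-1) ^+ (bitn y p.1 * bitn y p.2).

Definition pcz_phase f := exists (a : 'I_n -> 'I_4) (s : seq ('I_n * 'I_n)),
  all (fun p => p.1 != p.2) s /\ f =1 fun y => Pphase a y * CZphase s y.

Lemma eq_pcz_phase {f g} : pcz_phase f -> f =1 g -> pcz_phase g.
Proof. by move=> [a [s [hs ef]]] fg; exists a, s; split => // y; rewrite -fg. Qed.

Lemma pcz_phase1 : pcz_phase (fun _ => 1).
Proof.
exists (fun _ => ord0), [::]; split => // y.
by rewrite /Pphase /CZphase big_nil mulr1 big1 // => j _; rewrite mul0n.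
Qed.

Lemma pcz_phaseM {f g} : pcz_phase f -> pcz_phase g -> pcz_phase (fun y => f y * g y).
Proof.
move=> [a1 [s1 [h1 e1]]] [a2 [s2 [h2 e2]]].
exists (fun j => Ordinal (ltn_pmod (a1 j + a2 j) (isT : (0 < 4)%N))), (s1 ++ s2).
split; first by rewrite all_cat h1 h2.
move=> y; rewrite e1 e2 /Pphase /CZphase big_cat /= mulrACA -big_split /=.
by congr (_ * _); apply: eq_bigr => j _; rewrite /bitn expCi_modn -exprD mulnDl.
Qed.

Lemma pcz_phaseX {f} k : pcz_phase f -> pcz_phase (fun y => f y ^+ k).
Proof.
move=> pf; elim: k => [|k IHk].
  by apply: (eq_pcz_phase pcz_phase1) => y; rewrite expr0.
by apply: (eq_pcz_phase (pcz_phaseM pf IHk)) => y; rewrite exprS.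
Qed.

Lemma pcz_phase_prod (I : Type) (r : seq I) (F : I -> basis n -> algC) :
  (forall i, pcz_phase (F i)) -> pcz_phase (fun y => \prod_(i <- r) F i y).
Proof.
move=> pF; elim: r => [|i r IHr].
  by apply: (eq_pcz_phase pcz_phase1) => y; rewrite big_nil.
by apply: (eq_pcz_phase (pcz_phaseM (pF i) IHr)) => y; rewrite big_cons.
Qed.

Lemma pcz_phase_Pbit (l : 'I_n) (c : 'I_4) : pcz_phase (fun y => 'i ^+ (c * bitn y l)).
Proof.
exists (fun j => if j == l then c else ord0), [::]; split => // y.
rewrite /CZphase big_nil mulr1 /Pphase (bigD1 l) //= eqxx big1 ?mulr1 //.
by move=> j /negbTE ->; rewrite mul0n.
Qed.

(* On a single qubit CZ degenerates to Z = P^2, which is why CZ-layers may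
   assume distinct pairs. *)
Lemma pcz_phase_CZbit (l l' : 'I_n) :
  pcz_phase (fun y => (-1) ^+ (bitn y l' * bitn y l)).
Proof.
have [->|ne] := eqVneq l' l.
  apply: (eq_pcz_phase (pcz_phase_Pbit l (@Ordinal 4 2 isT))) => y /=.
  by rewrite /bitn; case: (y l ord0 != 0); rewrite //= expr1 sqrCi.
exists (fun _ => ord0), [:: (l', l)]; split; first by rewrite /= ne.
by move=> y; rewrite /CZphase big_seq1 /Pphase big1 ?mul1r // => j _; rewrite mul0n.
Qed.

Lemma pcz_phase_sign_lin (w : 'I_n -> 'F_2) (l : 'I_n) (r : seq 'I_n) :
  pcz_phase (fun y => (-1) ^+ (nbit (\sum_(l' <- r) w l' * y l' ord0) * bitn y l)).
Proof.
elim: r => [|l' r IHr].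
  by apply: (eq_pcz_phase pcz_phase1) => y; rewrite big_nil /nbit eqxx.
have [w0|w1] := F2_cases (w l').
  by apply: (eq_pcz_phase IHr) => y; rewrite big_cons w0 mul0r add0r.
apply: (eq_pcz_phase (pcz_phaseM (pcz_phase_CZbit l l') IHr)) => y.
by rewrite big_cons w1 mul1r sign_nbitD.
Qed.

Lemma pcz_phase_expCi_lin (w : 'I_n -> 'F_2) (c : 'I_4) (r : seq 'I_n) :
  pcz_phase (fun y => 'i ^+ (c * nbit (\sum_(l <- r) w l * y l ord0))).
Proof.
elim: r => [|l r IHr].
  by apply: (eq_pcz_phase pcz_phase1) => y; rewrite big_nil /nbit eqxx muln0.
have [w0|w1] := F2_cases (w l).
  by apply: (eq_pcz_phase IHr) => y; rewrite big_cons w0 mul0r add0r.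
have carry := pcz_phaseX c (pcz_phase_sign_lin w l r).
apply: (eq_pcz_phase (pcz_phaseM (pcz_phaseM (pcz_phase_Pbit l c) IHr) carry)) => y.
by rewrite big_cons w1 mul1r expCi_nbitD.
Qed.

Lemma pcz_phase_Pphase_mul (a : 'I_n -> 'I_4) (B : 'M['F_2]_n) :
  pcz_phase (fun y => Pphase a (B *m y)).
Proof.
apply: pcz_phase_prod => j.
apply: (eq_pcz_phase (pcz_phase_expCi_lin (B j) (a j) (index_enum 'I_n))) => y.
by rewrite /bitn mxE.
Qed.

End PhasePolynomials.

Section MonomialOperators.

Context {n : nat}.
Implicit Types (x y z : basis n) (U V : qop n) (B C : 'M['F_2]_n).

Definition monomial B (f : basis n -> algC) : qop n :=
  fun x y => (x == B *m y)%:R * f y.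

Lemma sum_delta z (E : basis n -> algC) : \sum_x (x == z)%:R * E x = E z.
Proof.
rewrite (bigD1 z) //= eqxx mul1r big1 ?addr0 // => x /negbTE ->.
by rewrite mul0r.
Qed.

Lemma qmul_monomial B C f g :
  qmul (monomial B f) (monomial C g) =2 monomial (B *m C) (fun y => f (C *m y) * g y).
Proof.
move=> x y; rewrite /qmul /monomial.
rewrite (eq_bigr (fun z => (z == C *m y)%:R * ((x == B *m z)%:R * f z * g y))).
  by rewrite sum_delta mulmxA; ring.
by move=> z _; ring.
Qed.

Lemma qmul_monomial_eq {U V B C f g} :
    U =2 monomial B f -> V =2 monomial C g ->
  qmul U V =2 monomial (B *m C) (fun y => f (C *m y) * g y).
Proof.
by move=> eU eV x y; rewrite -qmul_monomial; apply: eq_bigr => z _; rewrite eU eV.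
Qed.

Lemma Clayer_monomial B : Clayer B =2 monomial B (fun _ => 1).
Proof. by move=> x y; rewrite /monomial mulr1. Qed.

Lemma Player_monomial a : Player a =2 monomial 1%:M (Pphase a).
Proof.
by move=> x y; rewrite /monomial mul1mx /Player; case: eqVneq => [->|_]; rewrite ?mul0r.
Qed.

Lemma CZgate_monomial j k :
  CZgate j k =2 monomial 1%:M (fun y => (-1) ^+ (bitn y j * bitn y k)).
Proof.
by move=> x y; rewrite /monomial mul1mx /CZgate; case: eqVneq => [->|_]; rewrite ?mul0r.
Qed.

Lemma CZlayer_monomial s : CZlayer s =2 monomial 1%:M (CZphase s).
Proof.
elim: s => [|p s IHs] x y /=.
  by rewrite /qid /monomial mul1mx /CZphase big_nil mulr1.
rewrite (qmul_monomial_eq (CZgate_monomial _ _) IHs) /monomial !mul1mx.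
by rewrite /CZphase big_cons.
Qed.

End MonomialOperators.

Lemma PCcircuit_monomial {n m : nat} (L : nat -> 'I_n -> 'I_4)
    (A : nat -> 'M['F_2]_n) {k : nat} :
    (forall i, (i < m)%N -> A i \in unitmx) -> (k <= m)%N ->
  exists B f, B \in unitmx /\ pcz_phase f /\ PCcircuit L A k =2 monomial B f.
Proof.
move=> hA; elim: k => [|k IHk] hk.
  exists 1%:M, (fun _ => 1); split; first exact: unitmx1.
  by split; [exact: pcz_phase1 | move=> x y; rewrite /monomial mul1mx mulr1].
have [B [f [hB [hf e]]]] := IHk (ltnW hk).
exists (A k *m B), (fun y => Pphase (L k) (B *m y) * f y); split.
  by rewrite unitmx_mul hA.
split; first exact: (pcz_phaseM (pcz_phase_Pphase_mul (L k) B) hf).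
have e1 := qmul_monomial_eq (Player_monomial (L k)) e.
have e2 := qmul_monomial_eq (Clayer_monomial (A k)) e1.
by move=> x y; rewrite /= e2 mul1mx /monomial mul1r.
Qed.

Theorem theorem1 (n m : nat) (hn : (1 <= n)%N) (hm : (1 <= m)%N)
    (L : nat -> 'I_n -> 'I_4) (A : nat -> 'M['F_2]_n)
    (hA : forall k : nat, (k < m)%N -> A k \in unitmx) :
  exists (a : 'I_n -> 'I_4) (s : seq ('I_n * 'I_n)) (A' : 'M['F_2]_n),
    A' \in unitmx /\ all (fun p => p.1 != p.2) s /\
    forall x y : basis n,
      PCcircuit L A m x y
      = qmul (Clayer A') (qmul (CZlayer s) (Player a)) x y.
Proof.
have [B [f [hB [[a [s [hs ef]]] e]]]] := PCcircuit_monomial L A hA (leqnn m).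
exists a, s, B; do 2!split => //.
have rhs := qmul_monomial_eq (Clayer_monomial B)
  (qmul_monomial_eq (CZlayer_monomial s) (Player_monomial a)).
move=> x y; rewrite e rhs /monomial /= !mul1mx mulmx1 ef mul1r.
by rewrite [CZphase _ _ * _]mulrC.
Qed.
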